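(* Let $V$ be a vertex operator algebra of central charge $C$ as described in the context, with $d=\dim V^{(1)}>0$, and let $\{u_\alpha\}_{\alpha=1}^d$ be a basis of $V^{(1)}$ with dual basis $\{u^\alpha\}$ with respect to the Li–Zamolodchikov metric, $\langle u^\alpha,u_\beta\rangle=\delta^\alpha_\beta$. For $a,b\in V^{(1)}$ define $$F(a,b;x,y)=\sum_{\alpha=1}^d\langle a,Y(u^\alpha,x)Y(u_\alpha,y)b\rangle .$$ Then $F(a,b;x,y)$ is (the expansion in the domain $|x|>|y|$ of) a rational function of the form $$F(a,b;x,y)=\frac{G(a,b;x,y)}{x^2y^2(x-y)^2},$$ where $G(a,b;x,y)$ is bilinear in $a,b$ and is a homogeneous symmetric polynomial in $x,y$ of degree $4$.
   Context: A vertex operator algebra (VOA) $V=\bigoplus_{k\ge0}V^{(k)}$ is $\mathbb Z$-graded with $\dim V^{(k)}<\infty$, $V^{(0)}=\mathbb C\mathbf 1$ ($\mathbf 1$ the vacuum), and for each $a\in V^{(k)}$ a vertex operator $Y(a,z)=\sum_{n\in\mathbb Z}a_nz^{-n-k}$ with modes $a_n\in\mathrm{End}\,V$, $a_{-k}\mathbf 1=a$, $Y(\mathbf 1,z)=\mathrm{Id}_V$; there is a conformal vector $\omega\in V^{(2)}$ with $Y(\omega,z)=\sum_nL_nz^{-n-2}$, the $L_n$ satisfying the Virasoro algebra $[L_m,L_n]=(m-n)L_{m+n}+(m^3-m)\frac{C}{12}\delta_{m,-n}$, $L_0$ acting on $V^{(k)}$ as $k$, $Y(L_{-1}a,z)=\partial_zY(a,z)$;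 and locality: for all $a,b$, $(x-y)^N[Y(a,x),Y(b,y)]=0$ for $N$ sufficiently large. It is assumed that $L_1v=0$ for all $v\in V^{(1)}$ and that $V$ carries the Li–Zamolodchikov metric: the unique symmetric invariant bilinear form $\langle\cdot,\cdot\rangle$ with $\langle\mathbf 1,\mathbf 1\rangle=1$ and $\langle Y(e^{zL_1}(-z^{-2})^{L_0}c,1/z)a,b\rangle=\langle a,Y(c,z)b\rangle$ for all $a,b,c\in V$, assumed non-degenerate. *)

From mathcomp Require Import all_boot all_algebra.
From mathcomp Require Import Rstruct complex.
From mathcomp Require Import mpoly.
Set Implicit Arguments.
Unset Strict Implicit.
Unset Printing Implicit Defensive.
Import GRing.Theory.
Local Open Scope ring_scope.

Definition CC : numClosedFieldType := (Rdefinitions.R)[i]%C.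

Section VOA.
Variable V : lmodType CC.

(* Vertex operators are encoded by their modes, with the usual convention
     Y(a,z) = \sum_{n \in Z} a(n) z^{-n-1},
   i.e. [mode a n b] = a(n) b.  For a of weight k the paper's mode a_n
   (Y(a,z) = \sum a_n z^{-n-k}) is a(n+k-1). *)
Variable mode : V -> int -> V -> V.
Variables (vac omega : V) (C : CC).

Definition Lvir (m : int) : V -> V := mode omega (m + 1).

Definition Vdeg (k : nat) (v : V) : Prop := Lvir 0 v = k%:R *: v.

Definition fin_dim (P : V -> Prop) : Prop :=
  exists s : seq V, forall v, P v ->
    exists c : 'I_(size s) -> CC, v = \sum_(i < size s) c i *: s`_i.

Definition binz (r : int) (i : nat) : CC :=
  (\prod_(j < i) (r - j%:Z)%:~R) / (i`!)%:R.

Record is_VOA : Prop := {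
  mode_linl : forall (c : CC) a a' n b,
      mode (c *: a + a') n b = c *: mode a n b + mode a' n b;
  mode_linr : forall (c : CC) a n b b',
      mode a n (c *: b + b') = c *: mode a n b + mode a n b';
  (* Y(a,z)b is a Laurent series: a(n)b = 0 for n large *)
  mode_trunc : forall a b, exists N : int, forall n, N <= n -> mode a n b = 0;
  vacuum_id : forall n b, mode vac n b = (if n == -1 then b else 0);
  creation : forall a, mode a (-1) vac = a /\
      (forall n : int, 0 <= n -> mode a n vac = 0);
  virasoro : forall (m n : int) v,
      Lvir m (Lvir n v) - Lvir n (Lvir m v) =
        (m - n)%:~R *: Lvir (m + n) v
        + (if m + n == 0 then ((m ^+ 3 - m)%:~R * C / 12%:R) *: v else 0);
  graded : forall v, exists (N : nat) (w : nat -> V),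
      v = \sum_(k < N) w k /\ forall k, Vdeg k (w k);
  deg_fin : forall k, fin_dim (Vdeg k);
  deg0 : forall v, Vdeg 0 v -> exists c : CC, v = c *: vac;
  (* Y(L_{-1} a, z) = d/dz Y(a,z) *)
  translation : forall a (n : int) b,
      mode (Lvir (-1) a) n b = - (n%:~R *: mode a (n - 1) b);
  (* locality: (x-y)^N [Y(a,x),Y(b,y)] = 0 for N large, coefficientwise *)
  locality : forall a b, exists N : nat, forall (m n : int) c,
      \sum_(j < N.+1) ((-1) ^+ j * 'C(N, j)%:R) *:
         (mode a (m + (N - j)%:Z) (mode b (n + j%:Z) c)
          - mode b (n + j%:Z) (mode a (m + (N - j)%:Z) c)) = 0;
  (* Jacobi (Borcherds) identity, written with finite sums:
     any N beyond which all the summands vanish may be used *)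
  borcherds : forall (a b c : V) (l m n : int) (N : nat),
      (forall i : nat, (N <= i)%N ->
         [/\ mode a (l + i%:Z) b = 0, mode b (n + i%:Z) c = 0
           & mode a (m + i%:Z) c = 0]) ->
      \sum_(i < N) binz m i *: mode (mode a (l + i%:Z) b) (m + n - i%:Z) c =
      \sum_(i < N) ((-1) ^+ i * binz l i) *:
         (mode a (m + l - i%:Z) (mode b (n + i%:Z) c)
          - (-1) ^+ `|l|%N *: mode b (n + l - i%:Z) (mode a (m + i%:Z) c))
}.

(* Invariance
     <Y(e^{zL_1}(-z^{-2})^{L_0} c, 1/z) a, b> = <a, Y(c,z) b>
   is written coefficientwise for homogeneous c of weight k
   (L_1^j c = 0 for j > k since it has negative weight):
     <a, c(n) b> = (-1)^k \sum_{j=0}^k 1/j! <(L_1^j c)(2k-j-n-2) a, b>. *)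
Record is_LZ_metric (form : V -> V -> CC) : Prop := {
  form_linl : forall (c : CC) a a' b, form (c *: a + a') b = c * form a b + form a' b;
  form_sym : forall a b, form a b = form b a;
  form_vac : form vac vac = 1;
  form_inv : forall (k : nat) c a b (n : int), Vdeg k c ->
      form a (mode c n b) =
      (-1) ^+ k * \sum_(j < k.+1)
          (j`!%:R)^-1 * form (mode (iter j (Lvir 1) c) (2 * k%:Z - j%:Z - n - 2) a) b;
  form_nondeg : forall a, (forall b, form a b = 0) -> a = 0
}.

(* Coefficient of x^p y^q in
     F(a,b;x,y) = \sum_alpha <a, Y(u^alpha,x) Y(u_alpha,y) b>. *)
Definition Fcoef (form : V -> V -> CC) (d : nat) (u u' : 'I_d -> V)
    (a b : V) (p q : int) : CC :=
  \sum_(al < d) form a (mode (u' al) (- p - 1) (mode (u al) (- q - 1) b)).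

End VOA.

(* Coefficient of x^p y^q in the expansion of (x - y)^{-2} in the domain
   |x| > |y| :  (x-y)^{-2} = \sum_{j >= 0} (j+1) x^{-j-2} y^j. *)
Definition iota_inv_sq (p q : int) : CC :=
  if (0 <= q) && (p == - q - 2) then (q + 1)%:~R else 0.

Definition xvar : 'I_2 := ord0.
Definition yvar : 'I_2 := ord_max.

(* Coefficient of x^p y^q in the expansion, in the domain |x| > |y|, of
   the rational function  G(x,y) / (x^2 y^2 (x-y)^2). *)
Definition expand_xy (G : {mpoly CC[2]}) (p q : int) : CC :=
  \sum_(m <- msupp G)
     G@_m * iota_inv_sq (p - (m xvar)%:Z + 2) (q - (m yvar)%:Z + 2).

(* By L_0-weights, the coefficient F(p, q) of x^p y^q vanishes off the line
   p + q = -2, and on it for q <= -3.  Invariance of the form gives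
   u(1) b = -<u, b> 1, hence F(0, -2) = -<a, b>.  For q >= 0 the commutator
   formula for weight-one fields rewrites u'_al(q+1) u_al(-q-1) b; the
   Casimir term \sum_al (u'_al(0) u_al)(0) b drops out because the 0-product
   is skew, leaving F(-q-2, q) = -[q = 0] <a, b> - (q+1) d <a, b>.  So for
   q >= 1 the antidiagonal is linear in q with slope F(-2, 0) - F(0, -2), and
   any such sequence is the expansion of G / (x^2 y^2 (x - y)^2) for the
   symmetric quartic G fitted to the three values at q = -2, -1, 0. *)

From mathcomp Require Import all_boot all_algebra.
From mathcomp Require Import Rstruct complex.
From mathcomp Require Import perm mpoly ssrcomplements bigenough.
From mathcomp Require Import ring zify.
Set Implicit Arguments.
Unset Strict Implicit.
Unset Printing Implicit Defensive.
Import GRing.Theory Num.Theory BigEnough.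
Local Open Scope ring_scope.

Section MonomialSum.
Variables (n : nat) (F : 'X_{1..n} -> CC).

Definition monomial_sum (G : {mpoly CC[n]}) := \sum_(m <- msupp G) G@_m * F m.

Lemma monomial_sumE G i : (msize G <= i)%N ->
  monomial_sum G = \sum_(m : 'X_{1..n < i}) G@_m * F m.
Proof.
move=> le_Gi; rewrite /monomial_sum (big_mksub 'X_{1..n < i}) ?msupp_uniq //=.
- by rewrite big_rmcond //= => m /memN_msupp_eq0 ->; rewrite mul0r.
- by move=> m /msize_mdeg_lt /leq_trans; apply.
Qed.

Lemma monomial_sumD G H :
  monomial_sum (G + H) = monomial_sum G + monomial_sum H.
Proof.
pose_big_enough i.
  rewrite !(monomial_sumE (i := i)) // -big_split; apply/eq_bigr => m _.
  by rewrite mcoeffD mulrDl.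
by close.
Qed.

Lemma monomial_sumZ c G : monomial_sum (c *: G) = c * monomial_sum G.
Proof.
pose_big_enough i.
  rewrite !(monomial_sumE (i := i)) // mulr_sumr; apply/eq_bigr => m _.
  by rewrite mcoeffZ mulrA.
by close.
Qed.

Lemma monomial_sumX m : monomial_sum 'X_[m] = F m.
Proof. by rewrite /monomial_sum msuppX big_seq1 mcoeffX eqxx mul1r. Qed.

End MonomialSum.

Definition mnm2 (i j : nat) : 'X_{1..2} :=
  [multinom (if k == xvar then i else j) | k < 2].

Lemma mnm2x i j : mnm2 i j xvar = i.
Proof. by rewrite mnmE. Qed.

Lemma mnm2y i j : mnm2 i j yvar = j.
Proof. by rewrite mnmE. Qed.

Lemma ord2P (k : 'I_2) : k = xvar \/ k = yvar.
Proof. by case: k => [[|[|]]] // lt_k2; [left | right]; apply: val_inj. Qed.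

Lemma perm2P (s : 'S_2) :
  (s xvar = xvar /\ s yvar = yvar) \/ (s xvar = yvar /\ s yvar = xvar).
Proof.
have sxy : s xvar != s yvar by rewrite (inj_eq perm_inj).
by case: (ord2P (s xvar)) (ord2P (s yvar)) sxy => -> [] ->;
  [rewrite eqxx | auto | auto | rewrite eqxx].
Qed.

Lemma mnm2_perm i j (s : 'S_2) :
  [multinom mnm2 i j (s k) | k < 2] =
  if s xvar == xvar then mnm2 i j else mnm2 j i.
Proof.
apply/mnmP => k; rewrite mnmE.
by case: (perm2P s) => -[sx sy]; case: (ord2P k) => ->; rewrite ?sx ?sy !mnmE.
Qed.

Lemma mnm2_homog i j : ('X_[mnm2 i j] : {mpoly CC[2]}) \is (i + j).-homog.
Proof.
by rewrite dhomogX /= mdegE !big_ord_recl big_ord0 addn0 !mnmE.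
Qed.

Definition sym_monomial (i j : nat) : {mpoly CC[2]} :=
  'X_[mnm2 i j] + 'X_[mnm2 j i].

Lemma sym_monomial_sym i j : sym_monomial i j \is symmetric.
Proof.
apply/issymP => s; rewrite msymD !msymX !mnm2_perm.
by case: ifP => // _; rewrite addrC.
Qed.

Lemma sym_monomial_homog i j : sym_monomial i j \is (i + j).-homog.
Proof. by apply: dhomogD; [|rewrite addnC]; apply: mnm2_homog. Qed.

Definition sym_quartic (g0 g1 g2 : CC) : {mpoly CC[2]} :=
  g0 *: sym_monomial 4 0 + g1 *: sym_monomial 3 1 + g2 *: 'X_[mnm2 2 2].

Lemma sym_quartic_homog g0 g1 g2 : sym_quartic g0 g1 g2 \is 4.-homog.
Proof.
by do 2?apply: dhomogD; apply: dhomogZ;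
  [exact: (sym_monomial_homog 4 0) | exact: (sym_monomial_homog 3 1)
  | exact: (mnm2_homog 2 2)].
Qed.

Lemma sym_quartic_sym g0 g1 g2 : sym_quartic g0 g1 g2 \is symmetric.
Proof.
do 2?apply: rpredD; apply: rpredZ; try exact: sym_monomial_sym.
by apply/issymP => s; rewrite msymX mnm2_perm; case: ifP.
Qed.

Lemma sym_quarticDZ c g0 g1 g2 h0 h1 h2 :
  sym_quartic (c * g0 + h0) (c * g1 + h1) (c * g2 + h2) =
  c *: sym_quartic g0 g1 g2 + sym_quartic h0 h1 h2.
Proof.
rewrite /sym_quartic !scalerDl !scalerDr !scalerA.
by rewrite [X in X + _ = _]addrACA [LHS]addrACA.
Qed.

Definition quartic_coef (p q : int) (i j : nat) : CC :=
  iota_inv_sq (p - i%:Z + 2) (q - j%:Z + 2).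

Lemma expand_xy_sym_quartic g0 g1 g2 p q :
  expand_xy (sym_quartic g0 g1 g2) p q =
    g0 * (quartic_coef p q 4 0 + quartic_coef p q 0 4)
  + g1 * (quartic_coef p q 3 1 + quartic_coef p q 1 3)
  + g2 * quartic_coef p q 2 2.
Proof.
pose F (m : 'X_{1..2}) :=
  iota_inv_sq (p - (m xvar)%:Z + 2) (q - (m yvar)%:Z + 2).
rewrite -[LHS]/(monomial_sum F _) !monomial_sumD !monomial_sumZ.
by rewrite !monomial_sumD !monomial_sumX /F !mnm2x !mnm2y.
Qed.

Lemma quartic_coef_off p q i j :
  (i + j = 4)%N -> p + q != -2 -> quartic_coef p q i j = 0.
Proof.
move=> ij4 pq; rewrite /quartic_coef /iota_inv_sq.
by case: ifP => // /andP[_ /eqP]; move: pq; lia.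
Qed.

Lemma quartic_coef_antidiag q i j : (i + j = 4)%N ->
  quartic_coef (- q - 2) q i j =
  if j%:Z <= q + 2 then (q - j%:Z + 3)%:~R else 0.
Proof.
move=> ij4; rewrite /quartic_coef /iota_inv_sq.
have -> : (- q - 2 - i%:Z + 2 == - (q - j%:Z + 2) - 2) by apply/eqP; lia.
have -> : (0 <= q - j%:Z + 2) = (j%:Z <= q + 2) by apply/idP/idP; lia.
by rewrite andbT; case: ifP => // _; congr (_%:~R); lia.
Qed.

(* Its coefficients solve the triangular system matching the expansion at
   (p, q) = (0, -2), (-1, -1), (-2, 0). *)
Definition antidiag_quartic (f : int -> int -> CC) : {mpoly CC[2]} :=
  sym_quartic (f 0 (-2)) (f (-1) (-1) - 2 * f 0 (-2))
              (f (-2) 0 - 2 * f (-1) (-1) + f 0 (-2)).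

Lemma antidiag_quarticDZ c (f g h : int -> int -> CC) :
  (forall p q, h p q = c * f p q + g p q) ->
  antidiag_quartic h = c *: antidiag_quartic f + antidiag_quartic g.
Proof.
move=> hE; rewrite /antidiag_quartic !hE -sym_quarticDZ.
by congr sym_quartic; ring.
Qed.

Lemma antidiag_quarticP (f : int -> int -> CC) :
  (forall p q, p + q != -2 -> f p q = 0) ->
  (forall q, q <= -3 -> f (- q - 2) q = 0) ->
  (forall q, 1 <= q -> f (- q - 2) q = (q + 1)%:~R * (f (-2) 0 - f 0 (-2))) ->
  forall p q, f p q = expand_xy (antidiag_quartic f) p q.
Proof.
move=> f_off f_low f_high p q; rewrite expand_xy_sym_quartic.
have [pq|pq] := eqVneq (p + q) (-2); last first.
  by rewrite f_off // !quartic_coef_off // !(mulr0, addr0).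
have -> : p = - q - 2 by lia.
rewrite !quartic_coef_antidiag //.
have [q_le|q_gt] := lerP q (-3).
  by rewrite f_low // !ifF ?(mulr0, addr0) //; lia.
have [->|q_neN2] := eqVneq q (-2); first by rewrite /=; ring.
have [->|q_neN1] := eqVneq q (-1); first by rewrite /=; ring.
have [->|q_ne0] := eqVneq q 0; first by rewrite /=; ring.
have q_ge1 : 1 <= q by lia.
have -> : (if 4%:Z <= q + 2 then (q - 4%:Z + 3)%:~R else 0) = (q - 1)%:~R :> CC.
  by case: ifP => ?; [congr (_%:~R); lia | have -> : q = 1 by lia].
by rewrite f_high // !ifT; [ring | lia..].
Qed.

Lemma binz0 r : binz r 0 = 1.
Proof. by rewrite /binz big_ord0 divr1. Qed.

Lemma binz1 r : binz r 1 = r%:~R.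
Proof. by rewrite /binz big_ord1 subr0 divr1. Qed.

Lemma binz0S i : binz 0 i.+1 = 0.
Proof. by rewrite /binz big_ord_recl subr0 !mul0r. Qed.

Lemma binz1SS i : binz 1 i.+2 = 0.
Proof. by rewrite /binz !big_ord_recl subrr mul0r mulr0 mul0r. Qed.

Section VertexAlgebra.
Variables (V : lmodType CC) (mode : V -> int -> V -> V).
Variables (vac omega : V) (C : CC).
Hypothesis HV : is_VOA mode vac omega C.
Variable form : V -> V -> CC.
Hypothesis Hform : is_LZ_metric mode vac omega form.

Local Notation L := (Lvir mode omega).

Lemma mode0l n b : mode 0 n b = 0.
Proof.
have := mode_linl HV 1 0 0 n b; rewrite !scale1r addr0 => mode0_eq.
by apply: (addrI (mode 0 n b)); rewrite -mode0_eq addr0.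
Qed.

Lemma mode0r a n : mode a n 0 = 0.
Proof.
have := mode_linr HV 1 a n 0 0; rewrite !scale1r addr0 => mode0_eq.
by apply: (addrI (mode a n 0)); rewrite -mode0_eq addr0.
Qed.

Lemma modeDl a a' n b : mode (a + a') n b = mode a n b + mode a' n b.
Proof. by have := mode_linl HV 1 a a' n b; rewrite !scale1r. Qed.

Lemma modeZl c a n b : mode (c *: a) n b = c *: mode a n b.
Proof. by have := mode_linl HV c a 0 n b; rewrite !addr0 mode0l addr0. Qed.

Lemma modeZr c a n b : mode a n (c *: b) = c *: mode a n b.
Proof. by have := mode_linr HV c a n b 0; rewrite !addr0 mode0r addr0. Qed.

Lemma mode_suml I (r : seq I) (P : pred I) (F : I -> V) n b :
  mode (\sum_(i <- r | P i) F i) n b = \sum_(i <- r | P i) mode (F i) n b.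
Proof.
apply: (big_morph (fun a => mode a n b)) => [a a'|]; last exact: mode0l.
exact: modeDl.
Qed.

Lemma mode_sumr I (r : seq I) (P : pred I) (F : I -> V) a n :
  mode a n (\sum_(i <- r | P i) F i) = \sum_(i <- r | P i) mode a n (F i).
Proof.
apply: (big_morph (mode a n)) => [b b'|]; last exact: mode0r.
by have := mode_linr HV 1 a n b b'; rewrite !scale1r.
Qed.

Lemma form0l b : form 0 b = 0.
Proof.
have := form_linl Hform 1 0 0 b; rewrite scale1r addr0 mul1r => form0_eq.
by apply: (addrI (form 0 b)); rewrite -form0_eq addr0.
Qed.

Lemma formDl a a' b : form (a + a') b = form a b + form a' b.
Proof. by have := form_linl Hform 1 a a' b; rewrite scale1r mul1r. Qed.

Lemma formZl c a b : form (c *: a) b = c * form a b.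
Proof. by have := form_linl Hform c a 0 b; rewrite addr0 form0l addr0. Qed.

Lemma formDr a b b' : form a (b + b') = form a b + form a b'.
Proof. by rewrite !(form_sym Hform a) formDl. Qed.

Lemma form0r a : form a 0 = 0.
Proof. by rewrite (form_sym Hform) form0l. Qed.

Lemma formZr c a b : form a (c *: b) = c * form a b.
Proof. by rewrite (form_sym Hform) formZl (form_sym Hform b). Qed.

Lemma form_suml I (r : seq I) (P : pred I) (F : I -> V) b :
  form (\sum_(i <- r | P i) F i) b = \sum_(i <- r | P i) form (F i) b.
Proof.
apply: (big_morph (fun a => form a b)) => [a a'|]; last exact: form0l.
exact: formDl.
Qed.

Lemma form_sumr I (r : seq I) (P : pred I) (F : I -> V) a :
  form a (\sum_(i <- r | P i) F i) = \sum_(i <- r | P i) form a (F i).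
Proof.
rewrite (form_sym Hform) form_suml.
by apply: eq_bigr => i _; apply: (form_sym Hform).
Qed.

Lemma LvirZ m c v : L m (c *: v) = c *: L m v.
Proof. exact: modeZr. Qed.

Lemma Lvir_sum m I (r : seq I) (P : pred I) (F : I -> V) :
  L m (\sum_(i <- r | P i) F i) = \sum_(i <- r | P i) L m (F i).
Proof. exact: mode_sumr. Qed.

Lemma Lvir_vac m : -1 <= m -> L m vac = 0.
Proof. by move=> m_ge; apply: (creation HV omega).2; lia. Qed.

Lemma omegaE : omega = L (-2) vac.
Proof. by rewrite /Lvir (creation HV omega).1. Qed.

Lemma Lvir1_omega : L 1 omega = 0.
Proof.
have := virasoro HV 1 (-2) vac.
by rewrite -omegaE !Lvir_vac // {2}/Lvir mode0r subr0 scaler0 addr0.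
Qed.

Lemma omega_weight2 : Vdeg mode omega 2 omega.
Proof.
have := virasoro HV 0 (-2) vac.
by rewrite -omegaE !Lvir_vac // {2}/Lvir mode0r subr0 add0r addr0.
Qed.

(* Invariance for c = omega: since L_1 omega = 0, L_0 is its own adjoint. *)
Lemma form_L0 a b : form a (L 0 b) = form (L 0 a) b.
Proof.
rewrite /Lvir (form_inv Hform a b 1 omega_weight2).
rewrite !big_ord_recl big_ord0 /= Lvir1_omega {1}/Lvir mode0r !mode0l !form0l.
by rewrite !mulr0 !addr0 expr2 mulrNN !mul1r invr1 mul1r.
Qed.

Lemma mode_trunc_from a b (o : int) :
  exists N : nat, forall i : nat, (N <= i)%N -> mode a (o + i%:Z) b = 0.
Proof.
have [N mode_eq0] := mode_trunc HV a b.
by exists `|N - o|%N => i le_Ni; apply: mode_eq0; lia.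
Qed.

(* The Borcherds identity for (omega, x, y) with l = 0 and m = 1 is the
   commutator [L_0, x(n)] = (L_{-1} x)(n+1) + (L_0 x)(n). *)
Lemma L0_mode x y (h k n : int) :
  L 0 x = h%:~R *: x -> L 0 y = k%:~R *: y ->
  L 0 (mode x n y) = (h + k - n - 1)%:~R *: mode x n y.
Proof.
move=> L0x L0y.
have [N1 trunc1] := mode_trunc_from omega x 0.
have [N2 trunc2] := mode_trunc_from x y n.
have [N3 trunc3] := mode_trunc_from omega y 1.
have trunc i : ((N1 + N2 + N3).+2 <= i)%N -> [/\ mode omega (0 + i%:Z) x = 0,
    mode x (n + i%:Z) y = 0 & mode omega (1 + i%:Z) y = 0].
  by move=> le_Ni; split; [apply: trunc1 | apply: trunc2 | apply: trunc3]; lia.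
move: (borcherds HV trunc).
rewrite 2!big_ord_recl big1 => [|i _]; last by rewrite binz1SS scale0r.
rewrite big_ord_recl big1 => [|i _]; last by rewrite binz0S mulr0 scale0r.
rewrite /= !binz0 binz1 !addr0 /bump /= addn0.
rewrite -[mode omega 0 x]/(L (-1) x) -[mode omega (0 + 1%Z) x]/(L 0 x).
rewrite -[mode omega 1 (mode x n y)]/(L 0 (mode x n y)).
rewrite -[mode omega 1 y]/(L 0 y).
rewrite (translation HV) L0x L0y modeZl modeZr !scale1r expr0 mul1r scale1r.
have -> : 1 + n - 1%Z = n by lia.
move=> /eqP; rewrite eq_sym subr_eq => /eqP ->.
by rewrite -scaleNr -!scalerDl; congr (_ *: _); rewrite !(intrD, intrB); ring.
Qed.

(* Induct on the number of homogeneous components: L_0 - N kills the top one. *)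
Lemma L0_eigenvector_eq0 v (lam : CC) :
  L 0 v = lam *: v -> (forall k : nat, lam != k%:R) -> v = 0.
Proof.
move=> + lam_nat; have [N [w [-> w_deg]]] := graded HV v.
elim: N w w_deg => [|N IHN] w w_deg L0v; first by rewrite big_ord0.
pose w' k := (k%:R - N%:R) *: w k.
have w'_deg k : Vdeg mode omega k (w' k).
  by rewrite /Vdeg /w' LvirZ (w_deg k) !scalerA mulrC.
have w'E : (lam - N%:R) *: \sum_(k < N.+1) w k = \sum_(k < N) w' k.
  rewrite scalerBl -L0v Lvir_sum !big_ord_recr /= w_deg scalerDr scaler_sumr.
  rewrite opprD addrACA subrr addr0 -sumrB.
  by apply: eq_bigr => k _; rewrite w_deg /w' scalerBl.
have := IHN w' w'_deg; rewrite -w'E LvirZ L0v scalerA mulrC -scalerA.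
move=> /(_ erefl) /eqP; rewrite scaler_eq0 subr_eq0 (negbTE (lam_nat N)).
by move=> /eqP.
Qed.

Lemma form_L0_orth a b (h k : CC) :
  L 0 a = h *: a -> L 0 b = k *: b -> h != k -> form a b = 0.
Proof.
move=> L0a L0b hk; have := form_L0 a b; rewrite L0a L0b formZr formZl => /eqP.
by rewrite -subr_eq0 -mulrBl mulf_eq0 subr_eq0 eq_sym (negbTE hk) => /eqP.
Qed.

Section WeightOne.
Hypothesis HL1 : forall v, Vdeg mode omega 1 v -> L 1 v = 0.

Local Notation V1 := (Vdeg mode omega 1).

Lemma L0_mode_weight1 x y n : V1 x -> V1 y ->
  L 0 (mode x n y) = (1 - n)%:~R *: mode x n y.
Proof.
move=> x1 y1; rewrite (L0_mode (h := 1) (k := 1) n x1 y1).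
by congr (_%:~R *: _); lia.
Qed.

Lemma weight1_mode_ge2 x y n : V1 x -> V1 y -> 2 <= n -> mode x n y = 0.
Proof.
move=> x1 y1 n_ge2; apply: (L0_eigenvector_eq0 (L0_mode_weight1 n x1 y1)) => k.
by rewrite -[k%:R]/((k%:Z)%:~R) eqr_int; lia.
Qed.

Lemma weight1_mode1 x y : V1 x -> V1 y -> mode x 1 y = - form x y *: vac.
Proof.
move=> x1 y1; have /(deg0 HV) [c xy_eq] : Vdeg mode omega 0 (mode x 1 y).
  by rewrite /Vdeg (L0_mode_weight1 1 x1 y1).
have := form_inv Hform vac y 1 x1.
rewrite !big_ord_recl big_ord0 /= (HL1 x1) mode0l form0l mulr0 addr0.
rewrite (creation HV x).1 xy_eq formZr (form_vac Hform) mulr1 => ->.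
by rewrite expr1 invr1 !addr0 !mul1r mulN1r.
Qed.

(* Borcherds identity with l = 0: the commutator formula
   [x(n), y(m)] = \sum_i binom(n, i) (x(i) y)(n + m - i),
   which stops at i = 1. *)
Lemma weight1_commutator x y b (n : int) : V1 x -> V1 y -> V1 b -> 1 <= n ->
  mode x n (mode y (- n) b) = mode y (- n) (mode x n b)
    + mode (mode x 0 y) 0 b + n%:~R *: mode (mode x 1 y) (-1) b.
Proof.
move=> x1 y1 b1 n_ge1.
have trunc i : (`|n|.+2 <= i)%N -> [/\ mode x (0 + i%:Z) y = 0,
    mode y (- n + i%:Z) b = 0 & mode x (n + i%:Z) b = 0].
  by move=> le_ni; split; apply: weight1_mode_ge2 => //; lia.
move: (borcherds HV trunc).
rewrite 2!big_ord_recl big1 => [|i _]; last first.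
  by rewrite (weight1_mode_ge2 x1 y1) ?mode0l ?scaler0 // /bump /=; lia.
rewrite big_ord_recl big1 => [|i _]; last by rewrite binz0S mulr0 scale0r.
rewrite /= !binz0 binz1 !addr0 /bump /= addn0 subrr add0r sub0r.
rewrite expr0 mul1r !scale1r => /eqP; rewrite eq_sym subr_eq => /eqP ->.
by rewrite addrC addrA.
Qed.

Lemma weight1_skew x y : V1 x -> V1 y -> mode x 0 y = - mode y 0 x.
Proof.
move=> x1 y1.
have trunc i : (2 <= i)%N -> [/\ mode x (0 + i%:Z) y = 0,
    mode y (0 + i%:Z) vac = 0 & mode x (-1 + i%:Z) vac = 0].
  move=> le_2i; split; first by apply: weight1_mode_ge2 => //; lia.
    by apply: (creation HV y).2; lia.
  by apply: (creation HV x).2; lia.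
move: (borcherds HV trunc).
rewrite !big_ord_recl !big_ord0 /= binz0S mulr0 scale0r !addr0 !binz0.
rewrite /bump /= addn0 binz1 add0r (weight1_mode1 x1 y1) modeZl.
rewrite (vacuum_id HV) /=.
rewrite !scaler0 addr0 (creation HV _).1 (creation HV x).1 (creation HV y).2 //.
by rewrite mode0r expr0 mul1r !scale1r sub0r.
Qed.

Section DualBasis.
Variables (d : nat) (u u' : 'I_d -> V).
Hypothesis Hu1 : forall al, V1 (u al).
Hypothesis Hu'1 : forall al, V1 (u' al).
Hypothesis Hu_span : forall v, V1 v ->
  exists c : 'I_d -> CC, v = \sum_(al < d) c al *: u al.
Hypothesis Hdual : forall al be, form (u' al) (u be) = (al == be)%:R.

Lemma dual_basis_expand v : V1 v -> v = \sum_(al < d) form (u' al) v *: u al.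
Proof.
move=> /Hu_span[c ->]; apply: eq_bigr => al _; congr (_ *: _).
rewrite form_sumr (bigD1 al) //= formZr Hdual eqxx mulr1 big1 ?addr0 //.
by move=> be /negbTE be_al; rewrite formZr Hdual eq_sym be_al mulr0.
Qed.

(* The Casimir element \sum_al u'_al(0) u_al is its own opposite: expanding
   u'_al in the basis u gives a symmetric matrix, and x(0) y is skew. *)
Lemma casimir_eq0 : \sum_(al < d) mode (u' al) 0 (u al) = 0.
Proof.
pose M al be := form (u' al) (u' be).
pose S := \sum_(al < d) \sum_(be < d) M be al *: mode (u be) 0 (u al).
have SE : \sum_(al < d) mode (u' al) 0 (u al) = S.
  apply: eq_bigr => al _; rewrite {1}(dual_basis_expand (Hu'1 al)) mode_suml.
  by apply: eq_bigr => be _; rewrite modeZl.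
have SNE : \sum_(al < d) mode (u' al) 0 (u al) = - S.
  under eq_bigr => al _ do rewrite (weight1_skew (Hu'1 al) (Hu1 al)).
  rewrite sumrN /S exchange_big /=; congr (- _); apply: eq_bigr => al _.
  rewrite {1}(dual_basis_expand (Hu'1 al)) mode_sumr.
  by apply: eq_bigr => be _; rewrite modeZr /M (form_sym Hform).
have /eqP : (2%:R : CC) *: \sum_(al < d) mode (u' al) 0 (u al) = 0.
  by rewrite scaler_nat mulr2n {1}SE SNE subrr.
by rewrite scaler_eq0 pnatr_eq0 => /eqP.
Qed.

Local Notation Fc := (Fcoef mode form u u').

Lemma Fcoef_linl c a a' b p q :
  Fc (c *: a + a') b p q = c * Fc a b p q + Fc a' b p q.
Proof.
rewrite /Fcoef mulr_sumr -big_split; apply: eq_bigr => al _.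
exact: (form_linl Hform).
Qed.

Lemma Fcoef_linr c a b b' p q :
  Fc a (c *: b + b') p q = c * Fc a b p q + Fc a b' p q.
Proof.
rewrite /Fcoef mulr_sumr -big_split; apply: eq_bigr => al _.
by rewrite !(mode_linr HV) formDr formZr.
Qed.

Lemma Fcoef_off_antidiag a b p q :
  V1 a -> V1 b -> p + q != -2 -> Fc a b p q = 0.
Proof.
move=> a1 b1 pq; rewrite /Fcoef big1 // => al _.
have inner := L0_mode_weight1 (- q - 1) (Hu1 al) b1.
have outer := L0_mode (h := 1) (- p - 1) (Hu'1 al) inner.
apply: (form_L0_orth a1 outer).
by rewrite -[1%:R]/((1%:Z)%:~R) eqr_int; move: pq; lia.
Qed.

Lemma Fcoef_low a b q : V1 b -> q <= -3 -> Fc a b (- q - 2) q = 0.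
Proof.
move=> b1 q_le; rewrite /Fcoef big1 // => al _.
by rewrite (weight1_mode_ge2 (Hu1 al) b1) ?mode0r ?form0r //; lia.
Qed.

Lemma Fcoef_0m2 a b : V1 a -> V1 b -> Fc a b 0 (-2) = - form a b.
Proof.
move=> a1 b1; rewrite /Fcoef [in RHS](dual_basis_expand a1) form_suml -sumrN.
have -> : - 0 - 1 = -1 :> int by [].
have -> : - -2 - 1 = 1 :> int by [].
apply: eq_bigr => al _.
rewrite (weight1_mode1 (Hu1 al) b1) modeZr (creation HV _).1 formZr formZl.
by rewrite (form_sym Hform a) mulNr mulrC.
Qed.

(* The commutator formula turns u'_al(n) u_al(-n) into u_al(-n) u'_al(n)
   plus the Casimir term, which vanishes, plus n times the identity. *)
Lemma Fcoef_antidiag a b q : V1 a -> V1 b -> 0 <= q ->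
  Fc a b (- q - 2) q =
  (if q == 0 then - form a b else 0) - (q + 1)%:~R * d%:R * form a b.
Proof.
move=> a1 b1 q_ge0; rewrite /Fcoef.
have -> : - (- q - 2) - 1 = q + 1 by lia.
have -> : - q - 1 = - (q + 1) by lia.
have n_ge1 : 1 <= q + 1 by lia.
under eq_bigr => al _ do
  rewrite (weight1_commutator (Hu'1 al) (Hu1 al) b1 n_ge1)
    (weight1_mode1 (Hu'1 al) (Hu1 al)) Hdual eqxx modeZl (vacuum_id HV) /=
    !formDr !formZr.
rewrite !big_split /= -[X in _ + X + _]form_sumr -mode_suml casimir_eq0.
rewrite mode0l form0r addr0 sumr_const card_ord; congr (_ + _); last first.
  by rewrite -mulr_natr; ring.
have [->|q_ne0] := eqVneq q 0; last first.
  rewrite big1 // => al _.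
  by rewrite (weight1_mode_ge2 (Hu'1 al) b1) ?mode0r ?form0r //; lia.
rewrite [in RHS](dual_basis_expand b1) form_sumr -sumrN; apply: eq_bigr => al _.
by rewrite (weight1_mode1 (Hu'1 al) b1) modeZr (creation HV _).1 !formZr mulNr.
Qed.

Lemma Fcoef_high a b q : V1 a -> V1 b -> 1 <= q ->
  Fc a b (- q - 2) q = (q + 1)%:~R * (Fc a b (-2) 0 - Fc a b 0 (-2)).
Proof.
move=> a1 b1 q_ge1; rewrite Fcoef_0m2 // (Fcoef_antidiag (q := 0)) //.
by rewrite Fcoef_antidiag ?ifF /= //; [ring | lia..].
Qed.

Lemma Fcoef_expand_xy a b : V1 a -> V1 b ->
  forall p q, Fc a b p q = expand_xy (antidiag_quartic (Fc a b)) p q.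
Proof.
move=> a1 b1; apply: antidiag_quarticP => [p q|q|q].
- exact: Fcoef_off_antidiag.
- exact: Fcoef_low.
- exact: Fcoef_high.
Qed.

End DualBasis.
End WeightOne.
End VertexAlgebra.

Theorem proposition1
  (V : lmodType CC) (mode : V -> int -> V -> V) (vac omega : V) (C : CC)
  (HV : is_VOA mode vac omega C)
  (HL1 : forall v, Vdeg mode omega 1 v -> Lvir mode omega 1 v = 0)
  (form : V -> V -> CC) (Hform : is_LZ_metric mode vac omega form)
  (d : nat) (hd : (0 < d)%N) (u u' : 'I_d -> V)
  (Hu1 : forall al, Vdeg mode omega 1 (u al))
  (Hu_free : forall c : 'I_d -> CC, \sum_(al < d) c al *: u al = 0 ->
               forall al, c al = 0)
  (Hu_span : forall v, Vdeg mode omega 1 v ->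
               exists c : 'I_d -> CC, v = \sum_(al < d) c al *: u al)
  (Hu'1 : forall al, Vdeg mode omega 1 (u' al))
  (Hdual : forall al be, form (u' al) (u be) = (al == be)%:R) :
  exists G : V -> V -> {mpoly CC[2]},
    (forall (c : CC) a a' b,
       Vdeg mode omega 1 a -> Vdeg mode omega 1 a' -> Vdeg mode omega 1 b ->
       G (c *: a + a') b = c *: G a b + G a' b /\
       G b (c *: a + a') = c *: G b a + G b a') /\
    forall a b, Vdeg mode omega 1 a -> Vdeg mode omega 1 b ->
      [/\ G a b \is 4.-homog, G a b \is symmetric
        & forall p q : int, Fcoef mode form u u' a b p q = expand_xy (G a b) p q].
Proof.
exists (fun a b => antidiag_quartic (Fcoef mode form u u' a b)); split.
  move=> c a a' b _ _ _; split; apply: antidiag_quarticDZ => p q.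
    exact: (Fcoef_linl Hform).
  exact: (Fcoef_linr HV Hform).
move=> a b a1 b1; split.
- exact: sym_quartic_homog.
- exact: sym_quartic_sym.
- exact: (Fcoef_expand_xy HV Hform HL1 Hu1 Hu'1 Hu_span Hdual).
Qed.
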